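(* Let $n\ge 0$, let $\lambda,\mu$ be decompositions of $n+1$, and for $1\le j\le n$ let $\phi(x_j)=I_{n+1}+E_{j+1,j}$ and $\phi(y_j)=I_{n+1}+E_{j,j+1}$ in $\mathrm{GL}_{n+1}(\mathbb{F}_2)$. Then the image of the homomorphism $\phi_{\lambda,\mu}\colon\langle A_{2,n}(S_{\lambda|\mu})\rangle\to\mathrm{GL}_{n+1}(\mathbb{F}_2)$ sending each generator $z\in S_{\lambda|\mu}$ to $\phi(z)$ (equivalently, the subgroup of $\mathrm{GL}_{n+1}(\mathbb{F}_2)$ generated by $\{\phi(z): z\in S_{\lambda|\mu}\}$) is $P_{\lambda|\mu}$.
   Context: $E_{i,j}$ is the matrix unit with $1$ in position $(i,j)$. A decomposition of $N$ is a finite sequence of positive integers $\lambda=(\lambda_1,\dots,\lambda_l)$ with sum $N$; $P_\lambda\le\mathrm{GL}_N(\mathbb{F}_2)$ is the group of invertible block upper triangular matrices with diagonal blocks of sizes $\lambda_1,\dots,\lambda_l$ in this order; $P_\mu^t$ is the group of transposes of elements of $P_\mu$; $P_{\lambda|\mu}=P_\lambda\cap P_\mu^t$. The stopover set is $\overline{s}(\lambda)=\{\lambda_1,\lambda_1+\lambda_2,\dots,\lambda_1+\dots+\lambda_{l-1}\}$, and $S_{\lambda|\mu}=\{x_i : 1\le i\le n,\ i\notin\overline{s}(\lambda)\}\cup\{y_j: 1\le j\le n,\ j\notin\overline{s}(\mu)\}$. The group $\langle A_{2,n}\rangle$ has generators $X=\{x_1,\dots,x_n,y_1,\dots,y_n\}$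 and relations: $z^2=e$ ($z\in X$); $(x_ix_{i+1})^4=(y_iy_{i+1})^4=e$ ($1\le i\le n-1$); $(x_iy_i)^3=e$ ($1\le i\le n$); $(zt)^2=e$ for every other pair of distinct $z,t\in X$; $(x_ix_{i+1}y_i)^3=(x_ix_{i+1}y_{i+1})^3=(x_iy_iy_{i+1})^3=(x_{i+1}y_iy_{i+1})^3=e$ ($1\le i\le n-1$); $(x_ix_{i+1}x_{i+2})^4=(y_iy_{i+1}y_{i+2})^4=e$ ($1\le i\le n-2$). For $S\subseteq X$, $\langle A_{2,n}(S)\rangle$ is the group generated by $S$ subject to exactly those relations above involving only elements of $S$. *)

From mathcomp Require Import all_boot all_order all_algebra all_fingroup.
Set Implicit Arguments. Unset Strict Implicit. Unset Printing Implicit Defensive.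
Import GRing.Theory.
Local Open Scope ring_scope.

Definition is_decomposition (N : nat) (lam : seq nat) : Prop :=
  all (fun k => 0 < k)%N lam /\ sumn lam = N.

(* Stopover set {l1, l1+l2, ..., l1+...+l_{l-1}} (as a sequence). *)
Definition stopovers (lam : seq nat) : seq nat :=
  take (size lam).-1 (scanl addn 0%N lam).

(* 0-based block index of the 0-based row/column i:
   number of stopovers s with s <= i (i.e. s < i+1). *)
Definition blk (lam : seq nat) (i : nat) : nat :=
  count (fun s => s <= i)%N (stopovers lam).

Definition block_upper (N : nat) (lam : seq nat) (A : 'M['F_2]_N) : bool :=
  [forall i : 'I_N, forall j : 'I_N, (A i j != 0) ==> (blk lam i <= blk lam j)%N].

Definition Pgrp (n : nat) (lam : seq nat) : {set {'GL_(n.+1)['F_2]}} :=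
  [set g : {'GL_(n.+1)['F_2]} | block_upper lam (GLval g)].

Definition Ptgrp (n : nat) (mu : seq nat) : {set {'GL_(n.+1)['F_2]}} :=
  [set g : {'GL_(n.+1)['F_2]} | block_upper mu (GLval g)^T].

Definition Plm (n : nat) (lam mu : seq nat) : {set {'GL_(n.+1)['F_2]}} :=
  Pgrp n lam :&: Ptgrp n mu.

(* phi(x_j) = I + E_{j+1,j}, phi(y_j) = I + E_{j,j+1}  (1-based j, 1 <= j <= n);
   in 0-based indices these are the entries (j, j-1) and (j-1, j). *)
Definition phi_x (n j : nat) : 'M['F_2]_(n.+1) :=
  1%:M + delta_mx (inord j) (inord j.-1).
Definition phi_y (n j : nat) : 'M['F_2]_(n.+1) :=
  1%:M + delta_mx (inord j.-1) (inord j).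

Definition phi_S (n : nat) (lam mu : seq nat) : {set {'GL_(n.+1)['F_2]}} :=
  [set g : {'GL_(n.+1)['F_2]} |
     [exists j : 'I_(n.+1), [&& (0 < j)%N, (nat_of_ord j \notin stopovers lam)
                              & GLval g == phi_x n j]]
  || [exists j : 'I_(n.+1), [&& (0 < j)%N, (nat_of_ord j \notin stopovers mu)
                              & GLval g == phi_y n j]]].

(* P_{lam|mu} is the group of invertible matrices supported on the preorder
   i <= j :<-> blk lam i <= blk lam j /\ blk mu j <= blk mu i.  Gaussian
   elimination that only uses transvections I + E_ij with i <= j shows that any
   such "support group" of a preorder is generated by the transvections it
   contains.  Each of these is an iterated commutator of adjacent generators,
   since [I + E_ik, I + E_kj] = I + E_ij, and the block conditions let one walk
   from i to j through indices that are not stopovers. *)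

From mathcomp Require Import all_boot all_order all_algebra all_fingroup.
Set Implicit Arguments. Unset Strict Implicit. Unset Printing Implicit Defensive.
Import GRing.Theory.
Local Open Scope ring_scope.

Lemma pchar_F2 : (2 \in [pchar 'F_2])%R.
Proof. exact: pchar_Fp. Qed.

Lemma F2_neq0_eq1 (x : 'F_2) : x != 0 -> x = 1.
Proof. by case: x => [[|[|k]] Hk] //= _; apply/val_inj. Qed.

Lemma F2_addmx_xx m k (A : 'M['F_2]_(m, k)) : A + A = 0.
Proof. by apply/matrixP => i j; rewrite !mxE (addrr_pchar2 pchar_F2). Qed.

Lemma sum_neq0_exists (I : finType) (F : I -> 'F_2) :
  \sum_k F k != 0 -> exists k, F k != 0.
Proof.
move=> Fsum; have /existsP [k Fk] : [exists k, F k != 0].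
  by apply: contraNT Fsum => /existsPn F0; rewrite big1 // => k _; apply/eqP/negbNE/F0.
by exists k.
Qed.

Section Transvection.
Variable n : nat.
Local Notation M := 'M['F_2]_n.+1.
Local Notation GL := {'GL_n.+1['F_2]}.
Implicit Types (i j : 'I_n.+1) (A : M).

Definition transvection_mx i j : M := 1%:M + delta_mx i j.

Lemma transvection_mx_mulE i j A x y :
  (transvection_mx i j *m A) x y = A x y + (x == i)%:R * A j y.
Proof.
rewrite mulmxDl mul1mx mxE; congr (_ + _); rewrite mxE.
rewrite (bigD1 j) //= big1 => [|k /negbTE kj]; last by rewrite mxE kj andbF mul0r.
by rewrite mxE eqxx andbT addr0.
Qed.

Lemma mulmx_transvectionE i j A x y :
  (A *m transvection_mx i j) x y = A x y + A x i * (y == j)%:R.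
Proof.
rewrite mulmxDr mulmx1 mxE; congr (_ + _); rewrite mxE.
rewrite (bigD1 i) //= big1 => [|k /negbTE ki]; last by rewrite mxE ki mulr0.
by rewrite mxE eqxx addr0.
Qed.

Lemma delta_mx_sqr i j : i != j -> delta_mx i j *m delta_mx i j = 0 :> M.
Proof. by move=> ij; rewrite mul_delta_mx_0 // eq_sym. Qed.

Lemma transvection_mx_sqr i j : i != j ->
  transvection_mx i j *m transvection_mx i j = 1%:M.
Proof.
move=> ij; rewrite mulmxDl !mulmxDr !mul1mx mulmx1 delta_mx_sqr // addr0.
by rewrite -addrA F2_addmx_xx addr0.
Qed.

Definition transvection i j : GL := insubd (1%g : GL) (transvection_mx i j).

Lemma transvectionE i j : i != j -> GLval (transvection i j) = transvection_mx i j.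
Proof.
move=> ij; rewrite insubdK //.
by case: (mulmx1_unit (transvection_mx_sqr ij)).
Qed.

Lemma transvection_sqr i j : i != j -> (transvection i j * transvection i j = 1)%g.
Proof.
move=> ij; apply: val_inj; change (GLval (transvection i j * transvection i j) = GLval 1).
by rewrite GL_MxE transvectionE // transvection_mx_sqr // GL_1E.
Qed.

Lemma GL_transvectionE (g : GL) i j : i != j ->
  GLval g = transvection_mx i j -> g = transvection i j.
Proof.
move=> ij gE; apply: val_inj.
by change (GLval g = GLval (transvection i j)); rewrite transvectionE.
Qed.

Lemma transvection_mulgE (g : GL) i j x y : i != j ->
  GLval (transvection i j * g) x y = GLval g x y + (x == i)%:R * GLval g j y.
Proof. by move=> ij; rewrite GL_MxE transvectionE // transvection_mx_mulE. Qed.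

Lemma mulg_transvectionE (g : GL) i j x y : i != j ->
  GLval (g * transvection i j) x y = GLval g x y + GLval g x i * (y == j)%:R.
Proof. by move=> ij; rewrite GL_MxE transvectionE // mulmx_transvectionE. Qed.

Lemma transvection_mx_comm a b c : a != b -> b != c -> a != c ->
  transvection_mx a b *m transvection_mx b c *m transvection_mx a b *m transvection_mx b c
  = transvection_mx a c.
Proof.
move=> ab bc ac; rewrite /transvection_mx.
(* The product is (1 + N)^2 with N^2 = E_ac, and N + N = 0 over F_2. *)
set N := delta_mx b c + (delta_mx a b + delta_mx a c) : M.
have ba : b != a by rewrite eq_sym.
have cb : c != b by rewrite eq_sym.
have ca : c != a by rewrite eq_sym.
have NN : N *m N = delta_mx a c.
  rewrite /N !(mulmxDl, mulmxDr) !mul_delta_mx_cond eqxx.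
  rewrite (negbTE ba) (negbTE cb) (negbTE ca) !mulr0n.
  by rewrite !(addr0, add0r) mulr1n.
have X : (1%:M + delta_mx a b) *m (1%:M + delta_mx b c) = 1%:M + N :> M.
  by rewrite mulmxDl !mulmxDr !mul1mx mulmx1 mul_delta_mx /N -addrA.
clearbody N; rewrite -mulmxA X.
by rewrite mulmxDl !mulmxDr !mul1mx mulmx1 NN addrA -(addrA 1%:M N N) F2_addmx_xx addr0.
Qed.

Lemma invg_transvection i j : i != j -> (transvection i j)^-1%g = transvection i j.
Proof. by move=> ij; apply/eqP; rewrite eq_invg_mul transvection_sqr. Qed.

Lemma commg_transvection a b c : a != b -> b != c -> a != c ->
  [~ transvection a b, transvection b c]%g = transvection a c.
Proof.
move=> ab bc ac; rewrite /commg /conjg !invg_transvection // !mulgA.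
by apply: GL_transvectionE => //; rewrite !GL_MxE !transvectionE // transvection_mx_comm.
Qed.

(* Lets the chains of upper (b = true) and lower (b = false) transvections
   share one induction. *)
Definition oriented_transvection (b : bool) i j :=
  if b then transvection i j else transvection j i.

Lemma commg_oriented_transvection b a k c : a != k -> k != c -> a != c ->
  [~ oriented_transvection b a k, oriented_transvection b k c]%g
  = oriented_transvection b a c.
Proof.
case: b => /= ak kc ac; first exact: commg_transvection.
by rewrite -invgR commg_transvection 1?eq_sym // invg_transvection // eq_sym.
Qed.

End Transvection.

Section SupportGroup.
Variables (n : nat) (Q : rel 'I_n.+1).
Hypotheses (Q_refl : reflexive Q) (Q_trans : transitive Q).
Local Notation M := 'M['F_2]_n.+1.
Local Notation GL := {'GL_n.+1['F_2]}.

Definition supported (A : M) := [forall i, forall j, (A i j != 0) ==> Q i j].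

Lemma supportedP (A : M) : reflect (forall i j, A i j != 0 -> Q i j) (supported A).
Proof.
apply: (iffP forallP) => [AQ i j | AQ i]; first exact/implyP/(forallP (AQ i)).
by apply/forallP => j; apply/implyP/AQ.
Qed.

Definition supp_group := [set g : GL | supported (GLval g)].

Lemma supp_group_entry (g : GL) i j : g \in supp_group -> GLval g i j != 0 -> Q i j.
Proof. by rewrite inE => /supportedP; apply. Qed.

Lemma group_set_supp_group : group_set supp_group.
Proof.
apply/group_setP; split.
  rewrite inE; apply/supportedP => i j; rewrite GL_1E mxE.
  by have [->|_] := eqVneq i j; [rewrite Q_refl | rewrite mulr0n eqxx].
move=> g h gQ hQ; rewrite inE; apply/supportedP => i j.
rewrite GL_MxE mxE => /sum_neq0_exists [k].
have [->|/(supp_group_entry gQ) Qik] := eqVneq (GLval g i k) 0; first by rewrite mul0r eqxx.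
have [->|/(supp_group_entry hQ) Qkj] := eqVneq (GLval h k j) 0; first by rewrite mulr0 eqxx.
by move=> _; exact: Q_trans Qik Qkj.
Qed.
Canonical supp_group_group := Group group_set_supp_group.

Lemma transvection_supp i j : i != j -> Q i j -> transvection i j \in supp_group.
Proof.
move=> ij Qij; rewrite inE transvectionE //; apply/supportedP => x y; rewrite !mxE.
have [->|xy] := eqVneq x y; first by rewrite Q_refl.
by rewrite mulr0n add0r; case: andP => [[/eqP-> /eqP->]|]; rewrite ?eqxx.
Qed.

Variable H : {group GL}.
Hypothesis transvection_H : forall i j, i != j -> Q i j -> transvection i j \in H.

Definition id_upto (A : M) (k : nat) :=
  forall x y : 'I_n.+1, (x < k)%N || (y < k)%N -> A x y = (x == y)%:R.

Lemma id_upto_full (g : GL) : id_upto (GLval g) n.+1 -> g = 1%g.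
Proof.
move=> gI; apply: val_inj; change (GLval g = GLval 1); rewrite GL_1E.
by apply/matrixP => x y; rewrite gI ?mxE ?ltn_ord.
Qed.

Section Elimination.
Variable c : 'I_n.+1.
Hypothesis id_upto_succ :
  forall g : GL, g \in supp_group -> id_upto (GLval g) c.+1 -> g \in H.

Lemma id_upto_row (A : M) (y : 'I_n.+1) : id_upto A c -> (y < c)%N -> A c y = 0.
Proof. by move=> AI yc; rewrite AI ?yc ?orbT // -val_eqE /= gtn_eqF. Qed.

Lemma id_upto_col (A : M) (x : 'I_n.+1) : id_upto A c -> (x < c)%N -> A x c = 0.
Proof. by move=> AI xc; rewrite AI ?xc // -val_eqE /= ltn_eqF. Qed.

Lemma clear_row (g : GL) : g \in supp_group -> id_upto (GLval g) c ->
  (forall x, GLval g x c = (x == c)%:R) -> g \in H.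
Proof.
move Hm : #|[set j | (j != c) && (GLval g c j != 0)]| => m.
elim: m g Hm => [|m IHm] g Hm gQ gI gc.
  apply: id_upto_succ => // x y; rewrite !ltnS (leq_eqVlt x) (leq_eqVlt y) !val_eqE.
  case/orP => [/orP[/eqP-> | xc] | /orP[/eqP-> | yc]]; last 3 first.
  - by apply: gI; rewrite xc.
  - exact: gc.
  - by apply: gI; rewrite yc orbT.
  have [-> | yc] := eqVneq y c; first by rewrite gc eqxx.
  have : y \notin [set j | (j != c) && (GLval g c j != 0)] by rewrite (cards0_eq Hm) inE.
  by rewrite inE yc negbK => /eqP.
have /card_gt0P [j] : (0 < #|[set j | (j != c) && (GLval g c j != 0%R)]|)%N by rewrite Hm.
rewrite inE => /andP [jc gcj]; have cj : c != j by rewrite eq_sym.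
have Qcj := supp_group_entry gQ gcj.
rewrite -(mulgK (transvection c j) g) invg_transvection // groupM ?transvection_H //.
have g'E x y : GLval (g * transvection c j) x y = GLval g x y + GLval g x c * (y == j)%:R.
  exact: mulg_transvectionE.
apply: IHm.
- rewrite (cardsD1 j) inE jc gcj add1n in Hm; case: Hm => <-.
  apply: eq_card => y; rewrite !inE g'E gc eqxx mul1r.
  have [-> | _] := eqVneq y j; last by rewrite mulr0n addr0.
  by rewrite (F2_neq0_eq1 gcj) (addrr_pchar2 pchar_F2) eqxx andbF.
- by rewrite groupM // transvection_supp.
- move=> x y /orP[xc | yc]; rewrite g'E.
    by rewrite (id_upto_col gI xc) mul0r addr0 gI ?xc.
  have -> : (y == j) = false by apply: contraNF gcj => /eqP <-; rewrite (id_upto_row gI yc).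
  by rewrite mulr0 addr0 gI ?yc ?orbT.
- by move=> x; rewrite g'E (negbTE cj) mulr0 addr0.
Qed.

Lemma clear_col (g : GL) : g \in supp_group -> id_upto (GLval g) c ->
  GLval g c c = 1 -> g \in H.
Proof.
move Hm : #|[set r | (r != c) && (GLval g r c != 0)]| => m.
elim: m g Hm => [|m IHm] g Hm gQ gI gcc.
  apply: clear_row => // x; have [-> | xc] := eqVneq x c; first by rewrite gcc.
  have : x \notin [set r | (r != c) && (GLval g r c != 0)] by rewrite (cards0_eq Hm) inE.
  by rewrite inE xc negbK => /eqP.
have /card_gt0P [r] : (0 < #|[set r | (r != c) && (GLval g r c != 0%R)]|)%N by rewrite Hm.
rewrite inE => /andP [rc grc]; have Qrc := supp_group_entry gQ grc.
rewrite -(mulKg (transvection r c) g) invg_transvection // groupM ?transvection_H //.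
have g'E x y : GLval (transvection r c * g) x y = GLval g x y + (x == r)%:R * GLval g c y.
  exact: transvection_mulgE.
apply: IHm.
- rewrite (cardsD1 r) inE rc grc add1n in Hm; case: Hm => <-.
  apply: eq_card => x; rewrite !inE g'E gcc mulr1.
  have [-> | _] := eqVneq x r; last by rewrite mulr0n addr0.
  by rewrite (F2_neq0_eq1 grc) (addrr_pchar2 pchar_F2) eqxx andbF.
- by rewrite groupM // transvection_supp.
- move=> x y /orP[xc | yc]; rewrite g'E.
    have -> : (x == r) = false by apply: contraNF grc => /eqP <-; rewrite (id_upto_col gI xc).
    by rewrite mul0r addr0 gI ?xc.
  by rewrite (id_upto_row gI yc) mulr0 addr0 gI ?yc ?orbT.
- by rewrite g'E eq_sym (negbTE rc) mul0r addr0.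
Qed.

(* If the pivot vanishes, [g * g^-1 = 1] at [(c, c)] yields a column [k] with
   [g c k != 0] and [Q k c]; the transvection [k -> c] then creates the pivot. *)
Lemma elim_step (g : GL) : g \in supp_group -> id_upto (GLval g) c -> g \in H.
Proof.
move=> gQ gI; have [gcc | gcc0] := eqVneq (GLval g c c) 1; first exact: clear_col.
have {gcc0} gcc : GLval g c c = 0.
  by apply: contraNeq gcc0 => /F2_neq0_eq1 ->.
have : (GLval g *m GLval (g^-1)%g) c c != 0 by rewrite -GL_MxE mulgV GL_1E mxE eqxx oner_neq0.
rewrite mxE => /sum_neq0_exists [k].
have [-> | gck] := eqVneq (GLval g c k) 0; first by rewrite mul0r eqxx.
have [-> | /(supp_group_entry (groupVr gQ)) Qkc] := eqVneq (GLval (g^-1)%g k c) 0.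
  by rewrite mulr0 eqxx.
move=> _; have kc : k != c by apply: contraNneq gck => ->; rewrite gcc.
rewrite -(mulgK (transvection k c) g) invg_transvection // groupM ?transvection_H //.
have g'E x y : GLval (g * transvection k c) x y = GLval g x y + GLval g x k * (y == c)%:R.
  exact: mulg_transvectionE.
apply: clear_col.
- by rewrite groupM // transvection_supp.
- move=> x y /orP[xc | yc]; rewrite g'E.
    have xk : (x == k) = false by apply: contraNF gck => /eqP <-; rewrite (id_upto_row gI xc).
    by rewrite (gI x k) ?xc // xk mul0r addr0 gI ?xc.
  by rewrite -val_eqE /= (ltn_eqF yc) mulr0 addr0 gI ?yc ?orbT.
- by rewrite g'E gcc add0r eqxx mulr1 (F2_neq0_eq1 gck).
Qed.

End Elimination.

Lemma supp_group_sub : supp_group \subset H.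
Proof.
apply/subsetP => g gQ.
suff id_upto_H k : (k <= n.+1)%N ->
    forall h : GL, h \in supp_group -> id_upto (GLval h) (n.+1 - k) -> h \in H.
  by apply: (id_upto_H n.+1) => // x y; rewrite subnn.
elim: k => [_ h _ /id_upto_full -> | k IHk kn h hQ hI]; first exact: group1.
apply: (@elim_step (Ordinal (leq_subr k n : (n - k < n.+1)%N))) => //= h' h'Q h'I.
by apply: IHk => //; [exact: ltnW | rewrite subSn].
Qed.
End SupportGroup.

Lemma inord_eqE n i j : (i <= n)%N -> (j <= n)%N ->
  ((inord i : 'I_n.+1) == inord j) = (i == j).
Proof. by move=> ilt jlt; rewrite -val_eqE /= !inordK. Qed.

Lemma oriented_transvection_chain n (H : {group {'GL_n.+1['F_2]}}) b (f : nat -> nat) :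
  {homo f : i j / (i <= j)%N} ->
  (forall k, (k < n)%N -> (f k.+1 <= f k)%N ->
     oriented_transvection b (inord k) (inord k.+1) \in H) ->
  forall i j, (i < j <= n)%N -> (f j <= f i)%N ->
    oriented_transvection b (inord i) (inord j) \in H.
Proof.
move=> f_mono adj i; elim=> // j IHj /andP [ij jn] fji.
have fj : (f j.+1 <= f j)%N := leq_trans fji (f_mono i j ij).
have [-> | ltij] := eqVneq i j; first exact: adj.
have {}ltij : (i < j)%N by rewrite ltn_neqAle ltij.
have jn' : (j <= n)%N := ltnW jn.
have i_n : (i <= n)%N := leq_trans (ltnW ltij) jn'.
have ne_ij : i != j by rewrite ltn_eqF.
have ne_jSj : j != j.+1 by rewrite ltn_eqF.
have ne_iSj : i != j.+1 by rewrite ltn_eqF // ltnW.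
rewrite -(@commg_oriented_transvection _ b _ (inord j)) ?inord_eqE //.
apply: groupR; last exact: adj.
by apply: IHj; rewrite ?ltij // (leq_trans (f_mono _ _ (leqnSn j)) fji).
Qed.

Lemma blkS l i : blk l i.+1 = (blk l i + count (pred1 i.+1) (stopovers l))%N.
Proof.
rewrite /blk; elim: (stopovers l) => //= x s ->; rewrite addnACA; congr (_ + _)%N.
by rewrite leq_eqVlt ltnS; case: eqP => [->|_] /=; rewrite ?ltnn ?addn0.
Qed.

Lemma leq_blk l : {homo blk l : i j / (i <= j)%N}.
Proof. by move=> i j ij; apply: sub_count => x /= xi; exact: leq_trans xi ij. Qed.

Lemma blkS_leq l i : (blk l i.+1 <= blk l i)%N = (i.+1 \notin stopovers l).
Proof.
by rewrite blkS -{2}[blk l i]addn0 leq_add2l leqn0 eqn0Ngt -has_count has_pred1.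
Qed.

Section Parabolic.
Variables (n : nat) (lam mu : seq nat).
Local Notation GL := {'GL_n.+1['F_2]}.

Definition parabolic_rel : rel 'I_n.+1 :=
  fun i j => (blk lam i <= blk lam j)%N && (blk mu j <= blk mu i)%N.

Lemma parabolic_rel_refl : reflexive parabolic_rel.
Proof. by move=> i; rewrite /parabolic_rel !leqnn. Qed.

Lemma parabolic_rel_trans : transitive parabolic_rel.
Proof.
move=> j i k /andP [lam_ij mu_ji] /andP [lam_jk mu_kj].
by rewrite /parabolic_rel (leq_trans lam_ij lam_jk) (leq_trans mu_kj mu_ji).
Qed.

Lemma Plm_supp_group : Plm n lam mu = supp_group parabolic_rel.
Proof.
apply/setP => g; rewrite !inE /block_upper; apply/andP/supportedP.
  move=> [/forallP lamP /forallP muP] i j gij; apply/andP; split.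
    exact: implyP (forallP (lamP i) j) gij.
  by apply: implyP (forallP (muP j) i) _; rewrite mxE.
move=> gP; split; apply/forallP => i; apply/forallP => j; apply/implyP.
  by case/gP/andP.
by rewrite mxE => /gP/andP [].
Qed.

Lemma group_set_Plm : group_set (Plm n lam mu).
Proof.
rewrite Plm_supp_group.
exact: group_set_supp_group parabolic_rel_refl parabolic_rel_trans.
Qed.
Canonical Plm_group := Group group_set_Plm.

Lemma mem_phi_S (g : GL) : g \in phi_S n lam mu ->
  exists2 i, (i < n)%N &
    (i.+1 \notin stopovers lam /\ g = transvection (inord i.+1) (inord i))
    \/ (i.+1 \notin stopovers mu /\ g = transvection (inord i) (inord i.+1)).
Proof.
rewrite inE => /orP[] /existsP [[[|i] //= ilt] /andP [iS /eqP gE]];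
  exists i => //; have i_n := ltnW ilt.
- by left; split => //; apply: GL_transvectionE gE; rewrite inord_eqE // gtn_eqF.
- by right; split => //; apply: GL_transvectionE gE; rewrite inord_eqE // ltn_eqF.
Qed.

Lemma phi_S_x i : (i < n)%N -> i.+1 \notin stopovers lam ->
  transvection (inord i.+1) (inord i) \in phi_S n lam mu.
Proof.
move=> ilt iS; rewrite inE; apply/orP; left; apply/existsP.
exists (Ordinal (ilt : (i.+1 < n.+1)%N)); rewrite /= iS /=; apply/eqP.
by rewrite transvectionE // inord_eqE ?(ltnW ilt) // gtn_eqF.
Qed.

Lemma phi_S_y i : (i < n)%N -> i.+1 \notin stopovers mu ->
  transvection (inord i) (inord i.+1) \in phi_S n lam mu.
Proof.
move=> ilt iS; rewrite inE; apply/orP; right; apply/existsP.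
exists (Ordinal (ilt : (i.+1 < n.+1)%N)); rewrite /= iS /=; apply/eqP.
by rewrite transvectionE // inord_eqE ?(ltnW ilt) // ltn_eqF.
Qed.

Lemma phi_S_sub : phi_S n lam mu \subset Plm n lam mu.
Proof.
apply/subsetP => g /mem_phi_S [i ilt [[iS ->] | [iS ->]]]; have i_n := ltnW ilt;
  rewrite Plm_supp_group; apply: (transvection_supp parabolic_rel_refl).
- by rewrite inord_eqE // gtn_eqF.
- by rewrite /parabolic_rel !inordK // blkS_leq iS (leq_blk _ (leqnSn i)).
- by rewrite inord_eqE // ltn_eqF.
- by rewrite /parabolic_rel !inordK // blkS_leq iS (leq_blk _ (leqnSn i)).
Qed.

Lemma transvection_mem_gen (i j : 'I_n.+1) : i != j -> parabolic_rel i j ->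
  transvection i j \in <<phi_S n lam mu>>%g.
Proof.
move=> ij /andP [lam_ij mu_ji].
have [ltij | ltji | eqij] := ltngtP i j; last by rewrite (val_inj eqij) eqxx in ij.
- have := @oriented_transvection_chain n _ true _ (@leq_blk mu) _ i j.
  rewrite /= !inord_val; apply => //.
    by move=> k kn; rewrite blkS_leq => kS; exact/mem_gen/phi_S_y.
  by rewrite ltij -ltnS ltn_ord.
- have := @oriented_transvection_chain n _ false _ (@leq_blk lam) _ j i.
  rewrite /= !inord_val; apply => //.
    by move=> k kn; rewrite blkS_leq => kS; exact/mem_gen/phi_S_x.
  by rewrite ltji -ltnS ltn_ord.
Qed.

End Parabolic.

Theorem proposition3 (n : nat) (lam mu : seq nat) :
  is_decomposition n.+1 lam -> is_decomposition n.+1 mu ->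
  <<phi_S n lam mu>>%g = Plm n lam mu.
Proof.
(* [blk] is meaningful for any sequence. *)
move=> _ _; apply/eqP; rewrite eqEsubset gen_subG phi_S_sub /= Plm_supp_group.
apply: (supp_group_sub (@parabolic_rel_refl n lam mu) (@parabolic_rel_trans n lam mu)).
exact: transvection_mem_gen.
Qed.
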